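(* For all integers $t_1\geq s_1\geq 1$ and $t_2\geq s_2\geq 1$, $$\operatorname{degen}(K_{s_1,t_1}\boxtimes K_{s_2,t_2})=\max\{s_1+s_2+s_1s_2,\ \min\{t_1+t_2,\ s_1(t_2+1),\ s_2(t_1+1)\},\ \min\{s_1t_2,\ s_2t_1\}\}.$$
   Context: The degeneracy $\operatorname{degen}(G)$ of a graph $G$ is the minimum integer $d$ such that every subgraph of $G$ has minimum degree at most $d$. The strong product $G_1 \boxtimes G_2$ has vertex set $V(G_1)\times V(G_2)$, with distinct vertices $(a,v),(b,u)$ adjacent iff ($a=b$ or $ab\in E(G_1)$) and ($u=v$ or $uv\in E(G_2)$). *)

From mathcomp Require Import all_boot.
Set Implicit Arguments. Unset Strict Implicit. Unset Printing Implicit Defensive.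

Record sgraph := SGraph {
  vert :> finType;
  adj : rel vert;
  adj_sym : symmetric adj;
  adj_irr : irreflexive adj }.

Definition deg_in (G : sgraph) (S : {set G}) (v : G) : nat :=
  #|[set u in S | adj v u]|.

(* every (nonempty induced) subgraph has minimum degree at most d;
   it suffices to consider induced subgraphs, since deleting edges only
   lowers degrees; the empty graph has no minimum degree constraint. *)
Definition degen_ok (G : sgraph) (d : nat) : bool :=
  [forall S : {set G}, (S != set0) ==> [exists v in S, deg_in S v <= d]].

Lemma degen_ok_card (G : sgraph) : exists d, degen_ok G d.
Proof.
exists #|G|; apply/forallP => S; apply/implyP => /set0Pn [v Hv].
apply/existsP; exists v; rewrite Hv /=; exact: max_card.
Qed.

Definition degen (G : sgraph) : nat := ex_minn (degen_ok_card G).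

Definition kbip_adj (s t : nat) : rel ('I_s + 'I_t)%type :=
  fun x y => match x, y with
             | inl _, inr _ | inr _, inl _ => true
             | _, _ => false end.

Lemma kbip_sym s t : symmetric (@kbip_adj s t).
Proof. by case=> x; case. Qed.
Lemma kbip_irr s t : irreflexive (@kbip_adj s t).
Proof. by case. Qed.

Definition K (s t : nat) : sgraph :=
  @SGraph ('I_s + 'I_t)%type (@kbip_adj s t) (@kbip_sym s t) (@kbip_irr s t).

Definition sprod_adj (G1 G2 : sgraph) : rel (G1 * G2)%type :=
  fun x y => (x != y) && ((x.1 == y.1) || @adj G1 x.1 y.1)
                      && ((x.2 == y.2) || @adj G2 x.2 y.2).

Lemma sprod_sym G1 G2 : symmetric (@sprod_adj G1 G2).
Proof.
move=> x y; rewrite /sprod_adj eq_sym [y.1 == _]eq_sym [y.2 == _]eq_sym.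
by rewrite (@adj_sym G1 x.1) (@adj_sym G2 x.2).
Qed.
Lemma sprod_irr G1 G2 : irreflexive (@sprod_adj G1 G2).
Proof. by move=> x; rewrite /sprod_adj eqxx. Qed.

Definition sprod (G1 G2 : sgraph) : sgraph :=
  @SGraph (G1 * G2)%type (@sprod_adj G1 G2) (@sprod_sym G1 G2) (@sprod_irr G1 G2).

(* Split the vertices of K_{s1,t1} ⊠ K_{s2,t2} into four blocks according to
   which part of each factor they lie in.  A vertex (x, y) of a set S is
   adjacent to every vertex of S in the opposite block, and otherwise only to
   vertices sharing one coordinate with it, which lie in the two mixed blocks;
   this bounds its degree in S by block_bound.  For every nonempty S a case
   analysis on which blocks meet S finds a nonempty block whose bound is at
   most the formula.  Conversely, each term of the maximum is the minimum
   degree of an induced subgraph: K_{s1,s1} ⊠ K_{s2,s2} (a regular graph),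
   the vertices whose coordinates lie on different sides, and the vertices not
   lying in both large parts. *)

From mathcomp Require Import all_boot zify.

Set Implicit Arguments. Unset Strict Implicit. Unset Printing Implicit Defensive.

Lemma degen_eq (G : sgraph) d :
  degen_ok G d -> (forall m, degen_ok G m -> d <= m) -> degen G = d.
Proof.
move=> ok_d min_d; rewrite /degen; case: ex_minnP => m ok_m min_m.
by apply/eqP; rewrite eqn_leq min_m // min_d.
Qed.

Lemma degen_ok_deg_lb (G : sgraph) (S : {set G}) r m :
  degen_ok G m -> S != set0 -> {in S, forall v, r <= deg_in S v} -> r <= m.
Proof.
move=> /forallP /(_ S) /implyP ok /ok /existsP [v /andP [vS dv]] Sr.
exact: leq_trans (Sr v vS) dv.
Qed.

Definition nbhd (G : sgraph) (v : G) : {set G} := [set u | adj v u].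

Lemma deg_inE (G : sgraph) (S : {set G}) v : deg_in S v = #|S :&: nbhd v|.
Proof. by apply: eq_card => u; rewrite !inE. Qed.

Lemma inj_leq_deg_in (G : sgraph) (S : {set G}) v (T : finType) (f : T -> G) :
  injective f -> (forall z, f z \in S) -> (forall z, adj v (f z)) ->
  #|T| <= deg_in S v.
Proof.
move=> f_inj fS f_adj; rewrite -cardsT -(card_imset _ f_inj).
by apply/subset_leq_card/subsetP => _ /imsetP [z _ ->]; rewrite inE fS f_adj.
Qed.

Section StrongProduct.
Variables G1 G2 : sgraph.

Lemma sprod_adjE (x x' : G1) (y y' : G2) :
  adj ((x, y) : sprod G1 G2) (x', y') =
  [&& (x, y) != (x', y'), (x == x') || adj x x' & (y == y') || adj y y'].
Proof. by rewrite /= /sprod_adj andbA. Qed.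

Lemma sprod_nbhd_sub (x : G1) (y : G2) :
  nbhd ((x, y) : sprod G1 G2) \subset
    setX (nbhd x) (nbhd y) :|: setX [set x] (nbhd y) :|: setX (nbhd x) [set y].
Proof.
apply/subsetP => -[x' y']; rewrite !inE sprod_adjE /= xpair_eqE.
case: (eqVneq x' x) => [->|nx]; case: (eqVneq y' y) => [->|ny];
  rewrite ?eqxx ?(eq_sym x) ?(eq_sym y) ?(negbTE nx) ?(negbTE ny) //= ?andbT.
all: by move=> ->; rewrite ?orbT.
Qed.

Lemma deg_in_sprod_le (S : {set sprod G1 G2}) x y :
  deg_in S (x, y) <= #|S :&: setX (nbhd x) (nbhd y)|
    + #|S :&: setX [set x] (nbhd y)| + #|S :&: setX (nbhd x) [set y]|.
Proof.
rewrite deg_inE; apply: leq_trans (subset_leq_card (setIS S (sprod_nbhd_sub x y))) _.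
rewrite !setIUr; apply: leq_trans (leq_card_setU _ _) _.
by rewrite leq_add2r leq_card_setU.
Qed.

Lemma deg_in_setX (A : {set G1}) (B : {set G2}) x y : x \in A -> y \in B ->
  deg_in (setX A B : {set sprod G1 G2}) (x, y) = (deg_in A x).+1 * (deg_in B y).+1 - 1.
Proof.
move=> xA yB.
have closedE (G : sgraph) (C : {set G}) v : #|v |: (C :&: nbhd v)| = (deg_in C v).+1.
  by rewrite cardsU1 deg_inE !inE adj_irr andbF.
rewrite -!closedE -cardsX (cardsD1 (x, y)) !inE !eqxx /= subn1 /=.
rewrite deg_inE; apply: eq_card => -[x' y'].
rewrite !inE sprod_adjE /= !xpair_eqE.
case: (eqVneq x' x) => [->|_]; case: (eqVneq y' y) => [->|_];
  rewrite /= ?xA ?yB ?andbT //.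
by rewrite -!andbA; congr (_ && _); rewrite andbCA.
Qed.

End StrongProduct.

Definition side s t (x : K s t) : bool := if x is inl _ then true else false.

Definition part s t (b : bool) : {set K s t} := [set x | side x == b].

Definition part_size (s t : nat) (b : bool) : nat := if b then s else t.

Lemma adjK s t (x y : K s t) : adj x y = (side x != side y).
Proof. by case: x => i; case: y. Qed.

Lemma nbhdK s t (x : K s t) : nbhd x = part s t (~~ side x).
Proof. by apply/setP => y; rewrite !inE adjK eq_sym; case: (side x); case: (side y). Qed.

Lemma card_part s t b : #|part s t b| = part_size s t b.
Proof.
have partE : part s t b = if b then inl @: [set: 'I_s] else inr @: [set: 'I_t].
  apply/setP => x; rewrite inE.
  case: b; case: x => i /=; rewrite ?mem_imset ?inE //;
    by [exact: inl_inj | exact: inr_inj | apply/esym/imsetP => -[]].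
by case: b partE => ->; rewrite card_imset ?cardsT ?card_ord //;
  [exact: inl_inj | exact: inr_inj].
Qed.

(* The s-side and the first s vertices of the t-side: a copy of K_{s,s}. *)
Definition balanced s t : {set K s t} :=
  [set x : K s t | if x is inr j then val j < s else true].

Lemma balanced_deg s t (x : K s t) : s <= t -> s <= deg_in (balanced s t) x.
Proof.
move=> le_st; rewrite -[s in s <= _]card_ord; case: x => k.
  apply: (@inj_leq_deg_in _ _ _ _ (fun i => inr (widen_ord le_st i) : K s t)) => //.
    by move=> i j [] /val_inj.
  by move=> i; rewrite inE /= ltn_ord.
by apply: (@inj_leq_deg_in _ _ _ _ (fun i => inl i : K s t)) => // [i j []|i]; rewrite ?inE.
Qed.

Section CompleteBipartiteProduct.
Variables s1 t1 s2 t2 : nat.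
Local Notation G := (sprod (K s1 t1) (K s2 t2)).

Lemma adjKK (x x' : K s1 t1) (y y' : K s2 t2) :
  adj ((x, y) : G) (x', y') = [&& (x, y) != (x', y'),
    (x == x') || (side x != side x') & (y == y') || (side y != side y')].
Proof. by rewrite sprod_adjE !adjK. Qed.

Definition block_count (S : {set G}) p q := #|S :&: setX (part s1 t1 p) (part s2 t2 q)|.

Lemma block_count_le S p q : block_count S p q <= part_size s1 t1 p * part_size s2 t2 q.
Proof. by rewrite -!card_part -cardsX subset_leq_card ?subsetIr. Qed.

Definition block_bound (N : bool -> bool -> nat) p q :=
  N (~~ p) (~~ q) + minn (part_size s2 t2 (~~ q)) (N p (~~ q))
                  + minn (part_size s1 t1 (~~ p)) (N (~~ p) q).

Lemma deg_in_block_le (S : {set G}) x y :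
  deg_in S ((x, y) : G) <= block_bound (block_count S) (side x) (side y).
Proof.
have line_le (T1 T2 : finType) (X : {set T1}) (Y : {set T2}) (C : {set T1 * T2}) :
    #|C :&: setX X Y| <= #|X| * #|Y| by rewrite -cardsX subset_leq_card ?subsetIr.
apply: leq_trans (deg_in_sprod_le S x y) _; rewrite !nbhdK.
rewrite leq_add // ?leq_add // leq_min; apply/andP; split.
- by apply: leq_trans (line_le _ _ _ _ S) _; rewrite cards1 mul1n card_part.
- by apply/subset_leq_card/setIS/setXS; rewrite ?sub1set ?inE.
- by apply: leq_trans (line_le _ _ _ _ S) _; rewrite cards1 muln1 card_part.
- by apply/subset_leq_card/setIS/setXS; rewrite ?sub1set ?inE.
Qed.

Definition degen_formula :=
  maxn (s1 + s2 + s1 * s2)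
       (maxn (minn (t1 + t2) (minn (s1 * (t2 + 1)) (s2 * (t1 + 1))))
             (minn (s1 * t2) (s2 * t1))).

Lemma exists_block_bound_le (N : bool -> bool -> nat) :
  (forall p q, N p q <= part_size s1 t1 p * part_size s2 t2 q) ->
  (exists p q, 0 < N p q) ->
  exists p q, 0 < N p q /\ block_bound N p q <= degen_formula.
Proof.
move=> N_le [p0 [q0 N0]].
have := (N_le true true, N_le true false, N_le false true, N_le false false).
rewrite /block_bound /degen_formula /part_size /= => -[[[a_le b_le] c_le] d_le].
have [d0|] := posnP (N false false); last by exists false, false; split=> //=; lia.
have [a0|a_pos] := posnP (N true true).
  have [ft_le_tf|tf_lt_ft] := leqP (N false true) (N true false).
    by exists true, false; rewrite /=; split; case: p0 q0 N0 => -[]; lia.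
  by exists false, true; rewrite /=; split; lia.
have [b0|b_pos] := posnP (N true false).
  have [c0|c_pos] := posnP (N false true).
    by exists true, true; rewrite /=; lia.
  by exists false, true; rewrite /=; lia.
have [c0|c_pos] := posnP (N false true).
  by exists true, false; rewrite /=; lia.
have [tt_le|] := leqP (t1 + t2) (minn (s1 * t2 + s1) (s2 * t1 + s2)).
  by exists true, true; rewrite /=; lia.
have [ft_le|tf_lt] := leqP (s1 * t2 + s1) (s2 * t1 + s2).
  by exists false, true; rewrite /=; lia.
by exists true, false; rewrite /=; lia.
Qed.

Lemma degen_ok_formula : degen_ok G degen_formula.
Proof.
apply/forallP => S; apply/implyP => /set0Pn [[x0 y0] Sv0].
have nonempty : exists p q, 0 < block_count S p q.
  exists (side x0), (side y0); apply/card_gt0P; exists (x0, y0).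
  by rewrite !inE Sv0 !eqxx.
have [p [q [/card_gt0P [[x y]] pq le_formula]]] :=
  exists_block_bound_le (@block_count_le S) nonempty.
move: pq; rewrite !inE /= => /and3P [Sxy /eqP xp /eqP yq].
apply/existsP; exists (x, y); rewrite Sxy /=.
by apply: leq_trans (deg_in_block_le S x y) _; rewrite xp yq.
Qed.

Lemma degen_ok_balanced_lb m : 0 < s1 -> s1 <= t1 -> 0 < s2 -> s2 <= t2 ->
  degen_ok G m -> s1 + s2 + s1 * s2 <= m.
Proof.
move=> s1_gt0 le1 s2_gt0 le2 ok.
apply: (degen_ok_deg_lb (S := setX (balanced s1 t1) (balanced s2 t2) : {set G}) ok).
  by apply/set0Pn; exists (inl (Ordinal s1_gt0), inl (Ordinal s2_gt0)); rewrite !inE.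
move=> -[x y] /setXP [xB yB]; rewrite deg_in_setX //.
have := leq_mul (balanced_deg x le1 : s1 < _.+1) (balanced_deg y le2 : s2 < _.+1).
lia.
Qed.

Lemma degen_ok_cross_lb m : 0 < s1 -> 0 < t2 ->
  degen_ok G m -> minn (s1 * t2) (s2 * t1) <= m.
Proof.
move=> s1_gt0 t2_gt0 ok.
apply: (degen_ok_deg_lb (S := [set u : G | side u.1 != side u.2]) ok).
  by apply/set0Pn; exists (inl (Ordinal s1_gt0), inr (Ordinal t2_gt0)); rewrite inE.
move=> -[[a|a] [b|b]]; rewrite inE // => _.
- apply: leq_trans (geq_minr _ _) _.
  have -> : s2 * t1 = #|{: 'I_t1 * 'I_s2}| by rewrite card_prod !card_ord mulnC.
  apply: (@inj_leq_deg_in _ _ _ _ (fun z => (inr z.1, inl z.2) : G)).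
  + by move=> [i j] [i' j'] [-> ->].
  + by move=> z; rewrite inE.
  + by move=> z; rewrite adjKK.
- apply: leq_trans (geq_minl _ _) _.
  have -> : s1 * t2 = #|{: 'I_s1 * 'I_t2}| by rewrite card_prod !card_ord.
  apply: (@inj_leq_deg_in _ _ _ _ (fun z => (inl z.1, inr z.2) : G)).
  + by move=> [i j] [i' j'] [-> ->].
  + by move=> z; rewrite inE.
  + by move=> z; rewrite adjKK.
Qed.

Lemma degen_ok_small_side_lb m : 0 < s1 -> 0 < s2 ->
  degen_ok G m -> minn (t1 + t2) (minn (s1 * (t2 + 1)) (s2 * (t1 + 1))) <= m.
Proof.
move=> s1_gt0 s2_gt0 ok.
apply: (degen_ok_deg_lb (S := [set u : G | side u.1 || side u.2]) ok).
  by apply/set0Pn; exists (inl (Ordinal s1_gt0), inl (Ordinal s2_gt0)); rewrite inE.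
move=> -[[a|a] [b|b]]; rewrite inE //= => _.
- apply: leq_trans (geq_minl _ _) _.
  have -> : t1 + t2 = #|{: 'I_t2 + 'I_t1}| by rewrite card_sum !card_ord addnC.
  pose f z : G := match z with inl j => (inl a, inr j) | inr i => (inr i, inl b) end.
  apply: (@inj_leq_deg_in _ _ _ _ f).
  + by move=> [j|i] [j'|i'] [] // ->.
  + by move=> [j|i]; rewrite inE.
  + by move=> [j|i]; rewrite adjKK /= ?xpair_eqE ?eqxx.
- apply: leq_trans (geq_minr _ _) _; apply: leq_trans (geq_minr _ _) _.
  have -> : s2 * (t1 + 1) = #|{: 'I_t1 * 'I_s2 + 'I_s2}|.
    by rewrite card_sum card_prod !card_ord mulnDr muln1 mulnC.
  pose f z : G := match z with inl (i, j) => (inr i, inl j) | inr j => (inl a, inl j) end.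
  apply: (@inj_leq_deg_in _ _ _ _ f).
  + by move=> [[i j]|j] [[i' j']|j'] [] // -> // ->.
  + by move=> [[i j]|j]; rewrite inE.
  + by move=> [[i j]|j]; rewrite adjKK /= ?xpair_eqE ?eqxx.
- apply: leq_trans (geq_minr _ _) _; apply: leq_trans (geq_minl _ _) _.
  have -> : s1 * (t2 + 1) = #|{: 'I_s1 * 'I_t2 + 'I_s1}|.
    by rewrite card_sum card_prod !card_ord mulnDr muln1.
  pose f z : G := match z with inl (i, j) => (inl i, inr j) | inr i => (inl i, inl b) end.
  apply: (@inj_leq_deg_in _ _ _ _ f).
  + by move=> [[i j]|i] [[i' j']|i'] [] // -> // ->.
  + by move=> [[i j]|i]; rewrite inE.
  + by move=> [[i j]|i]; rewrite adjKK /= ?xpair_eqE ?eqxx.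
Qed.

End CompleteBipartiteProduct.

Theorem mainTheorem6 (s1 t1 s2 t2 : nat) :
  1 <= s1 -> s1 <= t1 -> 1 <= s2 -> s2 <= t2 ->
  degen (sprod (K s1 t1) (K s2 t2)) =
  maxn (s1 + s2 + s1 * s2)
       (maxn (minn (t1 + t2) (minn (s1 * (t2 + 1)) (s2 * (t1 + 1))))
             (minn (s1 * t2) (s2 * t1))).
Proof.
move=> s1_gt0 le1 s2_gt0 le2.
apply: degen_eq; first exact: degen_ok_formula.
move=> m ok; rewrite !geq_max.
rewrite (degen_ok_balanced_lb s1_gt0 le1 s2_gt0 le2 ok).
rewrite (degen_ok_small_side_lb s1_gt0 s2_gt0 ok).
by rewrite (degen_ok_cross_lb s1_gt0 (leq_trans s2_gt0 le2) ok).
Qed.
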